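(* In the labelled calculus $\mathbf{G3I}$, the rules $L\prec$: from $x\prec y,\Sigma;\underline{\Gamma},x:A,y:A\Rightarrow\underline{\Delta}$ infer $x\prec y,\Sigma;\underline{\Gamma},x:A\Rightarrow\underline{\Delta}$, and $R\prec$: from $x\prec y,\Sigma;\underline{\Gamma}\Rightarrow\underline{\Delta},x:A,y:A$ infer $x\prec y,\Sigma;\underline{\Gamma}\Rightarrow\underline{\Delta},y:A$ are admissible (whenever the premiss is derivable, so is the conclusion), for arbitrary formulae $A$.
   Context: Formulae are propositional formulae built from atoms, $\bot$, $\land$, $\lor$, $\supset$; labelled formulae are $x:A$ with $x$ a label. A labelled sequent is $\Sigma;\underline{\Gamma}\Rightarrow\underline{\Delta}$ with $\Sigma$ a finite multiset of relational formulae $x\prec y$ and $\underline{\Gamma},\underline{\Delta}$ finite multisets of labelled formulae; $S$ stands for $\underline{\Gamma}\Rightarrow\underline{\Delta}$. The rules of $\mathbf{G3I}$ ($P$ atomic): Ax: $x\prec y,\Sigma;x:P,\underline{\Gamma}\Rightarrow y:P,\underline{\Delta}$; L$\bot$: $\Sigma;x:\bot,\underline{\Gamma}\Rightarrow\underline{\Delta}$; L$\land$: from $\Sigma;\underline{\Gamma},x:A,x:B\Rightarrow\underline{\Delta}$ infer $\Sigma;\underline{\Gamma},x:(A\land B)\Rightarrow\underline{\Delta}$; R$\land$: from $\Sigma;\underline{\Gamma}\Rightarrow x:A,\underline{\Delta}$ and $\Sigma;\underline{\Gamma}\Rightarrow x:B,\underline{\Delta}$ infer $\Sigma;\underline{\Gamma}\Rightarrow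 x:(A\land B),\underline{\Delta}$; L$\lor$: from $\Sigma;\underline{\Gamma},x:A\Rightarrow\underline{\Delta}$ and $\Sigma;\underline{\Gamma},x:B\Rightarrow\underline{\Delta}$ infer $\Sigma;\underline{\Gamma},x:(A\lor B)\Rightarrow\underline{\Delta}$; R$\lor$: from $\Sigma;\underline{\Gamma}\Rightarrow x:A,x:B,\underline{\Delta}$ infer $\Sigma;\underline{\Gamma}\Rightarrow x:(A\lor B),\underline{\Delta}$; L$\supset$: from $x\prec y,\Sigma;x:(A\supset B),\underline{\Gamma}\Rightarrow\underline{\Delta},y:A$ and $x\prec y,\Sigma;x:(A\supset B),y:B,\underline{\Gamma}\Rightarrow\underline{\Delta}$ infer $x\prec y,\Sigma;x:(A\supset B),\underline{\Gamma}\Rightarrow\underline{\Delta}$; R$\supset$: from $x\prec y,\Sigma;y:A,\underline{\Gamma}\Rightarrow\underline{\Delta},y:B$ infer $\Sigma;\underline{\Gamma}\Rightarrow\underline{\Delta},x:(A\supset B)$, with $y$ fresh; refl: from $x\prec x,\Sigma;S$ infer $\Sigma;S$; trans: from $x\prec y,y\prec z,x\prec z,\Sigma;S$ infer $x\prec y,y\prec z,\Sigma;S$. *)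

From Stdlib Require Import List Permutation.
Import ListNotations.

Inductive form : Type :=
| Atom : nat -> form
| Bot : form
| And : form -> form -> form
| Or : form -> form -> form
| Imp : form -> form -> form.

Definition label := nat.
(* relational formula x ≺ y is the pair (x, y) *)
Definition relf := (label * label)%type.
Definition lform := (label * form)%type.

Definition rel_labels (S : list relf) : list label :=
  flat_map (fun p => [fst p; snd p]) S.
Definition lf_labels (G : list lform) : list label := map fst G.

(* Multisets are represented by lists; the rule [G3I_mset] identifies
   lists that are permutations of each other, so that derivability is a
   property of the underlying multisets. *)
Inductive G3I : list relf -> list lform -> list lform -> Prop :=
| G3I_mset S G D S' G' D' :
    G3I S G D -> Permutation S S' -> Permutation G G' -> Permutation D D' ->
    G3I S' G' D'
| G3I_Ax x y P S G D :
    G3I ((x, y) :: S) ((x, Atom P) :: G) ((y, Atom P) :: D)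
| G3I_Lbot x S G D :
    G3I S ((x, Bot) :: G) D
| G3I_Land x A B S G D :
    G3I S ((x, A) :: (x, B) :: G) D ->
    G3I S ((x, And A B) :: G) D
| G3I_Rand x A B S G D :
    G3I S G ((x, A) :: D) ->
    G3I S G ((x, B) :: D) ->
    G3I S G ((x, And A B) :: D)
| G3I_Lor x A B S G D :
    G3I S ((x, A) :: G) D ->
    G3I S ((x, B) :: G) D ->
    G3I S ((x, Or A B) :: G) D
| G3I_Ror x A B S G D :
    G3I S G ((x, A) :: (x, B) :: D) ->
    G3I S G ((x, Or A B) :: D)
| G3I_Limp x y A B S G D :
    G3I ((x, y) :: S) ((x, Imp A B) :: G) ((y, A) :: D) ->
    G3I ((x, y) :: S) ((y, B) :: (x, Imp A B) :: G) D ->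
    G3I ((x, y) :: S) ((x, Imp A B) :: G) D
| G3I_Rimp x y A B S G D :
    y <> x ->
    ~ In y (rel_labels S) -> ~ In y (lf_labels G) -> ~ In y (lf_labels D) ->
    G3I ((x, y) :: S) ((y, A) :: G) ((y, B) :: D) ->
    G3I S G ((x, Imp A B) :: D)
| G3I_refl x S G D :
    G3I ((x, x) :: S) G D ->
    G3I S G D
| G3I_trans x y z S G D :
    G3I ((x, z) :: (x, y) :: (y, z) :: S) G D ->
    G3I ((x, y) :: (y, z) :: S) G D.

(* A derivation of S; G => D transports along any label map h to a sequent
   S'; G' => D' that is at least as strong: each atom a < b of S becomes a
   pair h a, h b reachable in S'; each antecedent formula u:B is obtained
   from a formula of G' sitting below h u by introducing /\ and \/; dually
   each succedent formula u:B yields a formula of D' above h u through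
   \/, /\ and -> introductions.  By induction on the derivation: if the
   principal formula is covered by an introduction the rule disappears,
   otherwise the same rule is applied to the covering formula of the target,
   reachability being turned into atoms by refl and trans and the
   eigenvariable of R-> being renamed to a fresh label.  L< and R< are the
   instances with h the identity, because x < y makes x:A cover y:A on the
   left and y:A cover x:A on the right. *)
From Stdlib Require Import List Permutation Relations PeanoNat Lia.
Import ListNotations.

Definition reach (S : list relf) : label -> label -> Prop :=
  clos_refl_trans label (fun a b => In (a, b) S).

(* [lcover S G w B]: w:B is built by /\ and \/ introduction from formulae of G
   at worlds below w, so an antecedent containing G is as strong as one
   containing w:B; [rcover] is the dual notion for succedents, where an
   implication at w is covered by its antecedent and consequent at a world
   above w. *)
Inductive lcover (S : list relf) (G : list lform) : label -> form -> Prop :=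
| lcover_in v w B : In (v, B) G -> reach S v w -> lcover S G w B
| lcover_and w B C : lcover S G w B -> lcover S G w C -> lcover S G w (And B C)
| lcover_orl w B C : lcover S G w B -> lcover S G w (Or B C)
| lcover_orr w B C : lcover S G w C -> lcover S G w (Or B C).

Inductive rcover (S : list relf) (G D : list lform) : label -> form -> Prop :=
| rcover_in v w B : In (v, B) D -> reach S w v -> rcover S G D w B
| rcover_or w B C : rcover S G D w B -> rcover S G D w C -> rcover S G D w (Or B C)
| rcover_andl w B C : rcover S G D w B -> rcover S G D w (And B C)
| rcover_andr w B C : rcover S G D w C -> rcover S G D w (And B C)
| rcover_imp w z B C :
    reach S w z -> lcover S G z B -> rcover S G D z C -> rcover S G D w (Imp B C).

Set Implicit Arguments.

Definition lcovered (S : list relf) (G G' : list lform) : Prop :=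
  forall v E, In (v, E) G -> lcover S G' v E.

Definition rcovered (S : list relf) (G' D D' : list lform) : Prop :=
  forall v E, In (v, E) D -> rcover S G' D' v E.

Lemma reach_in S a b : In (a, b) S -> reach S a b.
Proof. intros H. now apply rt_step. Qed.

Lemma reach_refine S S' a b :
  (forall c d, In (c, d) S -> reach S' c d) -> reach S a b -> reach S' a b.
Proof.
  intros HS R. induction R.
  - now apply HS.
  - apply rt_refl.
  - eapply rt_trans; eauto.
Qed.

Lemma reach_incl S S' a b : incl S S' -> reach S a b -> reach S' a b.
Proof. intros HS. apply reach_refine. intros c d H. now apply reach_in, HS. Qed.

Lemma lcover_reach S G v w B : lcover S G v B -> reach S v w -> lcover S G w B.
Proof.
  intros H; revert w; induction H; intros w' R.
  - eapply lcover_in; [eassumption | eapply rt_trans; eassumption].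
  - apply lcover_and; auto.
  - apply lcover_orl; auto.
  - apply lcover_orr; auto.
Qed.

Lemma rcover_reach S G D v w B : rcover S G D v B -> reach S w v -> rcover S G D w B.
Proof.
  intros H; revert w; induction H; intros w' R.
  - eapply rcover_in; [eassumption | eapply rt_trans; eassumption].
  - apply rcover_or; auto.
  - apply rcover_andl; auto.
  - apply rcover_andr; auto.
  - eapply rcover_imp; [eapply rt_trans | |]; eassumption.
Qed.

Lemma lcover_refine S G S' G' w B :
  (forall a b, In (a, b) S -> reach S' a b) -> lcovered S' G G' ->
  lcover S G w B -> lcover S' G' w B.
Proof.
  intros HS HG H; induction H.
  - eapply lcover_reach; [apply HG; eassumption | now apply (reach_refine (S := S))].
  - now apply lcover_and.
  - now apply lcover_orl.
  - now apply lcover_orr.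
Qed.

Lemma rcover_refine S G D S' G' D' w B :
  (forall a b, In (a, b) S -> reach S' a b) -> lcovered S' G G' -> rcovered S' G' D D' ->
  rcover S G D w B -> rcover S' G' D' w B.
Proof.
  intros HS HG HD H; induction H.
  - eapply rcover_reach; [apply HD; eassumption | now apply (reach_refine (S := S))].
  - now apply rcover_or.
  - now apply rcover_andl.
  - now apply rcover_andr.
  - apply (@rcover_imp _ _ _ w z); [apply (reach_refine (S := S)) | apply (lcover_refine (S := S) (G := G)) |]; auto.
Qed.

Lemma lcovered_incl S G G' : incl G G' -> lcovered S G G'.
Proof. intros HG v E H. eapply lcover_in; [apply HG, H | apply rt_refl]. Qed.

Lemma rcovered_incl S G' D D' : incl D D' -> rcovered S G' D D'.
Proof. intros HD v E H. eapply rcover_in; [apply HD, H | apply rt_refl]. Qed.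

Lemma lcovered_replace S G G' G2 v F :
  Permutation G ((v, F) :: G2) -> lcover S G' v F -> incl G2 G' -> lcovered S G G'.
Proof.
  intros P HF HG u E H. apply (Permutation_in _ P) in H as [H | H].
  - now injection H as <- <-.
  - now apply (lcovered_incl S HG).
Qed.

Lemma rcovered_replace S G' D D' D2 v F :
  Permutation D ((v, F) :: D2) -> rcover S G' D' v F -> incl D2 D' -> rcovered S G' D D'.
Proof.
  intros P HF HD u E H. apply (Permutation_in _ P) in H as [H | H].
  - now injection H as <- <-.
  - now apply (rcovered_incl S G' HD).
Qed.

Lemma lcover_inv S G w F : lcover S G w F ->
  (exists v, In (v, F) G /\ reach S v w) \/
  match F with
  | And B C => lcover S G w B /\ lcover S G w C
  | Or B C => lcover S G w B \/ lcover S G w C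
  | _ => False
  end.
Proof. intros []; eauto. Qed.

Lemma rcover_inv S G D w F : rcover S G D w F ->
  (exists v, In (v, F) D /\ reach S w v) \/
  match F with
  | Or B C => rcover S G D w B /\ rcover S G D w C
  | And B C => rcover S G D w B \/ rcover S G D w C
  | Imp B C => exists z, reach S w z /\ lcover S G z B /\ rcover S G D z C
  | _ => False
  end.
Proof. intros []; eauto. Qed.

Lemma in_perm_cons {T : Type} {a : T} {l : list T} : In a l -> exists l', Permutation l (a :: l').
Proof.
  intros H. apply in_split in H as [l1 [l2 ->]].
  exists (l1 ++ l2). apply Permutation_sym, Permutation_middle.
Qed.

Lemma G3I_permS S S' G D : Permutation S S' -> G3I S G D -> G3I S' G D.
Proof. intros P H. eapply G3I_mset; eauto. Qed.

Lemma G3I_permL S G G' D : Permutation G G' -> G3I S G D -> G3I S G' D.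
Proof. intros P H. eapply G3I_mset; eauto. Qed.

Lemma G3I_permR S G D D' : Permutation D D' -> G3I S G D -> G3I S G D'.
Proof. intros P H. eapply G3I_mset; eauto. Qed.

Lemma G3I_Ax_in a b P S G D :
  In (a, b) S -> In (a, Atom P) G -> In (b, Atom P) D -> G3I S G D.
Proof.
  intros HS HG HD.
  destruct (in_perm_cons HS) as [S2 PS], (in_perm_cons HG) as [G2 PG],
    (in_perm_cons HD) as [D2 PD].
  eapply G3I_mset; [apply G3I_Ax | symmetry; eassumption ..].
Qed.

Lemma G3I_Lbot_in x S G D : In (x, Bot) G -> G3I S G D.
Proof.
  intros HG. destruct (in_perm_cons HG) as [G2 PG].
  eapply G3I_permL; [symmetry; eassumption | apply G3I_Lbot].
Qed.

Lemma G3I_Limp_in x y A B S G D :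
  In (x, y) S -> In (x, Imp A B) G ->
  G3I S G ((y, A) :: D) -> G3I S ((y, B) :: G) D -> G3I S G D.
Proof.
  intros HS HG H1 H2.
  destruct (in_perm_cons HS) as [S2 PS], (in_perm_cons HG) as [G2 PG].
  eapply G3I_mset; [apply G3I_Limp | symmetry; eassumption | symmetry; eassumption | reflexivity].
  - exact (G3I_mset _ _ _ _ _ _ H1 PS PG (Permutation_refl _)).
  - exact (G3I_mset _ _ _ _ _ _ H2 PS (perm_skip _ PG) (Permutation_refl _)).
Qed.

Lemma G3I_trans_in a b c S G D :
  In (a, c) S -> In (c, b) S -> G3I ((a, b) :: S) G D -> G3I S G D.
Proof.
  intros H1 H2 H. destruct (in_perm_cons H1) as [S1 P1].
  apply (Permutation_in _ P1) in H2 as [E | H2].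
  - injection E as -> ->. exact (G3I_refl _ _ _ _ H).
  - destruct (in_perm_cons H2) as [S2 P2].
    assert (P : Permutation S ((a, c) :: (c, b) :: S2))
      by exact (Permutation_trans P1 (perm_skip _ P2)).
    apply (G3I_permS (Permutation_sym P)), G3I_trans.
    eapply G3I_permS; [apply perm_skip, P | exact H].
Qed.

(* Reachability in S may be assumed to be a relational atom of S, because
   refl and trans can add the atoms of the corresponding chain. *)
Lemma G3I_reach S G D a b : reach S a b ->
  (forall S', incl S S' -> In (a, b) S' -> G3I S' G D) -> G3I S G D.
Proof.
  intros R. apply clos_rt_rt1n in R.
  induction R as [a | a c b Hac R IH]; intros K.
  - apply (G3I_refl a). apply K; [apply incl_tl, incl_refl | now left].
  - apply IH. intros S' HS Hcb. apply (@G3I_trans_in a b c S'); [now apply HS | exact Hcb |].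
    apply K; [now apply incl_tl | now left].
Qed.

Lemma fresh_label (l : list label) : exists z, ~ In z l.
Proof.
  exists (S (list_max l)). intros H.
  assert (Hle : Forall (fun k => k <= list_max l) l) by now apply list_max_le.
  rewrite Forall_forall in Hle. specialize (Hle _ H). lia.
Qed.

(** * Transport of derivations along label maps *)

Record embedding (h : label -> label) (S : list relf) (G D : list lform)
    (S' : list relf) (G' D' : list lform) : Prop := {
  embedding_rel : Forall (fun p => reach S' (h (fst p)) (h (snd p))) S;
  embedding_left : Forall (fun p => lcover S' G' (h (fst p)) (snd p)) G;
  embedding_right : Forall (fun p => rcover S' G' D' (h (fst p)) (snd p)) D }.

Definition transferable (S : list relf) (G D : list lform) : Prop :=
  forall h S' G' D', embedding h S G D S' G' D' -> G3I S' G' D'.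

Section Embedding.

Variables (h : label -> label) (S S' : list relf) (G D G' D' : list lform).

Lemma embedding_consS a b :
  reach S' (h a) (h b) -> embedding h S G D S' G' D' ->
  embedding h ((a, b) :: S) G D S' G' D'.
Proof. intros R []. now constructor; [constructor | |]. Qed.

Lemma embedding_consL u B :
  lcover S' G' (h u) B -> embedding h S G D S' G' D' ->
  embedding h S ((u, B) :: G) D S' G' D'.
Proof. intros H []. now constructor; [| constructor |]. Qed.

Lemma embedding_consR u B :
  rcover S' G' D' (h u) B -> embedding h S G D S' G' D' ->
  embedding h S G ((u, B) :: D) S' G' D'.
Proof. intros H []. now constructor; [| | constructor]. Qed.

Lemma embedding_consS_inv a b :
  embedding h ((a, b) :: S) G D S' G' D' ->
  reach S' (h a) (h b) /\ embedding h S G D S' G' D'.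
Proof.
  intros [HS HG HD]. apply Forall_cons_iff in HS as [H HS]. now split; [| constructor].
Qed.

Lemma embedding_consL_inv u B :
  embedding h S ((u, B) :: G) D S' G' D' ->
  lcover S' G' (h u) B /\ embedding h S G D S' G' D'.
Proof.
  intros [HS HG HD]. apply Forall_cons_iff in HG as [H HG]. now split; [| constructor].
Qed.

Lemma embedding_consR_inv u B :
  embedding h S G ((u, B) :: D) S' G' D' ->
  rcover S' G' D' (h u) B /\ embedding h S G D S' G' D'.
Proof.
  intros [HS HG HD]. apply Forall_cons_iff in HD as [H HD]. now split; [| constructor].
Qed.

Lemma embedding_perm S1 G1 D1 :
  Permutation S S1 -> Permutation G G1 -> Permutation D D1 ->
  embedding h S1 G1 D1 S' G' D' -> embedding h S G D S' G' D'.
Proof.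
  intros PS PG PD [HS HG HD].
  constructor; [rewrite PS | rewrite PG | rewrite PD]; assumption.
Qed.

Lemma embedding_refine S2 G2 D2 :
  (forall a b, In (a, b) S' -> reach S2 a b) -> lcovered S2 G' G2 -> rcovered S2 G2 D' D2 ->
  embedding h S G D S' G' D' -> embedding h S G D S2 G2 D2.
Proof.
  intros HS' HG' HD' [HS HG HD]. constructor.
  - eapply Forall_impl; [| exact HS]. intros p. now apply reach_refine.
  - eapply Forall_impl; [| exact HG]. intros p. now apply lcover_refine.
  - eapply Forall_impl; [| exact HD]. intros p. now apply rcover_refine.
Qed.

Lemma embedding_incl S2 G2 D2 :
  incl S' S2 -> incl G' G2 -> incl D' D2 ->
  embedding h S G D S' G' D' -> embedding h S G D S2 G2 D2.
Proof.
  intros HS HG HD. apply embedding_refine.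
  - intros a b H. now apply reach_in, HS.
  - now apply lcovered_incl.
  - now apply rcovered_incl.
Qed.

Lemma embedding_refineL G2 :
  lcovered S' G' G2 -> embedding h S G D S' G' D' -> embedding h S G D S' G2 D'.
Proof.
  intros HG. apply embedding_refine; [now apply reach_in | exact HG |].
  apply rcovered_incl, incl_refl.
Qed.

Lemma embedding_refineR D2 :
  rcovered S' G' D' D2 -> embedding h S G D S' G' D' -> embedding h S G D S' G' D2.
Proof.
  intros HD. apply embedding_refine; [now apply reach_in | apply lcovered_incl, incl_refl | exact HD].
Qed.

End Embedding.

Lemma embedding_id S G D : embedding (fun l => l) S G D S G D.
Proof.
  constructor; apply Forall_forall; intros [a b] H.
  - now apply reach_in.
  - eapply lcover_in; [exact H | apply rt_refl].
  - eapply rcover_in; [exact H | apply rt_refl].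
Qed.

Definition upd (h : label -> label) (y z : label) : label -> label :=
  fun l => if Nat.eq_dec l y then z else h l.

Lemma embedding_ext h h' S G D S' G' D' :
  (forall l, In l (rel_labels S) \/ In l (lf_labels G) \/ In l (lf_labels D) -> h' l = h l) ->
  embedding h S G D S' G' D' -> embedding h' S G D S' G' D'.
Proof.
  intros Hh [HS HG HD].
  assert (HSl : forall a b, In (a, b) S -> In a (rel_labels S) /\ In b (rel_labels S)).
  { intros a b H. split; apply in_flat_map; exists (a, b); simpl; auto. }
  assert (Hl : forall (L : list lform) u B, In (u, B) L -> In u (lf_labels L)).
  { intros L u B H. apply in_map_iff. now exists (u, B). }
  rewrite Forall_forall in HS, HG, HD.
  constructor; apply Forall_forall; intros [a b] H; simpl.
  - destruct (HSl a b H). rewrite !Hh by auto. exact (HS _ H).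
  - rewrite Hh by eauto. exact (HG _ H).
  - rewrite Hh by eauto. exact (HD _ H).
Qed.

(* The eigenvariable y of R-> is sent to the world z where the implication is
   refuted; freshness of y makes the other labels unaffected. *)
Lemma embedding_fresh h x y z A B S G D S' G' D' :
  y <> x -> ~ In y (rel_labels S) -> ~ In y (lf_labels G) -> ~ In y (lf_labels D) ->
  reach S' (h x) z -> lcover S' G' z A -> rcover S' G' D' z B ->
  embedding h S G D S' G' D' ->
  embedding (upd h y z) ((x, y) :: S) ((y, A) :: G) ((y, B) :: D) S' G' D'.
Proof.
  intros Hyx HS HG HD Rz HA HB E.
  assert (Hy : upd h y z y = z) by (unfold upd; now destruct Nat.eq_dec).
  assert (Hl : forall l, l <> y -> upd h y z l = h l)
    by (intros l Hl; unfold upd; now destruct Nat.eq_dec).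
  apply embedding_consS; [now rewrite Hy, Hl |].
  apply embedding_consL; [now rewrite Hy |].
  apply embedding_consR; [now rewrite Hy |].
  apply (embedding_ext (h := h)); [| exact E].
  intros l Hin. apply Hl. intros ->. intuition.
Qed.

Lemma transferable_perm S G D S1 G1 D1 :
  Permutation S S1 -> Permutation G G1 -> Permutation D D1 ->
  transferable S G D -> transferable S1 G1 D1.
Proof.
  intros PS PG PD T h S' G' D' E. apply (T h). eapply embedding_perm; eassumption.
Qed.

Lemma transferable_Ax x y P S G D :
  transferable ((x, y) :: S) ((x, Atom P) :: G) ((y, Atom P) :: D).
Proof.
  intros h S' G' D' E.
  destruct (embedding_consS_inv E) as [Rxy E1].
  destruct (embedding_consL_inv E1) as [Hx E2].
  destruct (embedding_consR_inv E2) as [Hy _].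
  destruct (lcover_inv Hx) as [[v [Hv Rv]] | []].
  destruct (rcover_inv Hy) as [[w [Hw Rw]] | []].
  apply (@G3I_reach _ _ _ v w).
  - eapply rt_trans; [exact Rv | eapply rt_trans; [exact Rxy | exact Rw]].
  - intros S0 _ Hvw. eapply G3I_Ax_in; eassumption.
Qed.

Lemma transferable_Lbot x S G D : transferable S ((x, Bot) :: G) D.
Proof.
  intros h S' G' D' E. destruct (embedding_consL_inv E) as [Hx _].
  destruct (lcover_inv Hx) as [[v [Hv _]] | []].
  eapply G3I_Lbot_in; exact Hv.
Qed.

Lemma transferable_Land x A B S G D :
  transferable S ((x, A) :: (x, B) :: G) D -> transferable S ((x, And A B) :: G) D.
Proof.
  intros T h S' G' D' E. destruct (embedding_consL_inv E) as [Hx E'].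
  destruct (lcover_inv Hx) as [[v [Hv Rv]] | [HA HB]].
  - destruct (in_perm_cons Hv) as [G2 PG].
    apply (G3I_permL (Permutation_sym PG)), G3I_Land, (T h).
    apply embedding_consL; [| apply embedding_consL]; [apply (lcover_in _ _ v); [simpl; auto | exact Rv] ..|].
    eapply embedding_refineL; [| exact E'].
    eapply lcovered_replace; [exact PG | | now do 2 apply incl_tl].
    apply lcover_and; (eapply lcover_in; [| apply rt_refl]); simpl; auto.
  - now apply (T h); repeat apply embedding_consL.
Qed.

Lemma transferable_Lor x A B S G D :
  transferable S ((x, A) :: G) D -> transferable S ((x, B) :: G) D ->
  transferable S ((x, Or A B) :: G) D.
Proof.
  intros T1 T2 h S' G' D' E. destruct (embedding_consL_inv E) as [Hx E'].
  destruct (lcover_inv Hx) as [[v [Hv Rv]] | [HA | HB]].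
  - destruct (in_perm_cons Hv) as [G2 PG].
    apply (G3I_permL (Permutation_sym PG)), G3I_Lor; [apply (T1 h) | apply (T2 h)];
      (apply embedding_consL; [eapply lcover_in; [now left | exact Rv] |]);
      (eapply embedding_refineL; [| exact E']);
      (eapply lcovered_replace; [exact PG | | now apply incl_tl]).
    + apply lcover_orl. eapply lcover_in; [now left | apply rt_refl].
    + apply lcover_orr. eapply lcover_in; [now left | apply rt_refl].
  - now apply (T1 h), embedding_consL.
  - now apply (T2 h), embedding_consL.
Qed.

Lemma transferable_Rand x A B S G D :
  transferable S G ((x, A) :: D) -> transferable S G ((x, B) :: D) ->
  transferable S G ((x, And A B) :: D).
Proof.
  intros T1 T2 h S' G' D' E. destruct (embedding_consR_inv E) as [Hx E'].
  destruct (rcover_inv Hx) as [[v [Hv Rv]] | [HA | HB]].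
  - destruct (in_perm_cons Hv) as [D2 PD].
    apply (G3I_permR (Permutation_sym PD)), G3I_Rand; [apply (T1 h) | apply (T2 h)];
      (apply embedding_consR; [eapply rcover_in; [now left | exact Rv] |]);
      (eapply embedding_refineR; [| exact E']);
      (eapply rcovered_replace; [exact PD | | now apply incl_tl]).
    + apply rcover_andl. eapply rcover_in; [now left | apply rt_refl].
    + apply rcover_andr. eapply rcover_in; [now left | apply rt_refl].
  - now apply (T1 h), embedding_consR.
  - now apply (T2 h), embedding_consR.
Qed.

Lemma transferable_Ror x A B S G D :
  transferable S G ((x, A) :: (x, B) :: D) -> transferable S G ((x, Or A B) :: D).
Proof.
  intros T h S' G' D' E. destruct (embedding_consR_inv E) as [Hx E'].
  destruct (rcover_inv Hx) as [[v [Hv Rv]] | [HA HB]].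
  - destruct (in_perm_cons Hv) as [D2 PD].
    apply (G3I_permR (Permutation_sym PD)), G3I_Ror, (T h).
    apply embedding_consR; [| apply embedding_consR]; [apply (rcover_in _ _ _ v); [simpl; auto | exact Rv] ..|].
    eapply embedding_refineR; [| exact E'].
    eapply rcovered_replace; [exact PD | | now do 2 apply incl_tl].
    apply rcover_or; (eapply rcover_in; [| apply rt_refl]); simpl; auto.
  - now apply (T h); repeat apply embedding_consR.
Qed.

Lemma transferable_Limp x y A B S G D :
  transferable ((x, y) :: S) ((x, Imp A B) :: G) ((y, A) :: D) ->
  transferable ((x, y) :: S) ((y, B) :: (x, Imp A B) :: G) D ->
  transferable ((x, y) :: S) ((x, Imp A B) :: G) D.
Proof.
  intros T1 T2 h S' G' D' E.
  destruct (embedding_consS_inv E) as [Rxy E1].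
  destruct (embedding_consL_inv E1) as [Hx _].
  destruct (lcover_inv Hx) as [[v [Hv Rv]] | []].
  apply (@G3I_reach _ _ _ v (h y)); [eapply rt_trans; eassumption |].
  intros S0 HS0 Hvy. eapply G3I_Limp_in; [exact Hvy | exact Hv | |].
  - apply (T1 h), embedding_consR; [eapply rcover_in; [now left | apply rt_refl] |].
    eapply embedding_incl; [exact HS0 | apply incl_refl | apply incl_tl, incl_refl | exact E].
  - apply (T2 h), embedding_consL; [eapply lcover_in; [now left | apply rt_refl] |].
    eapply embedding_incl; [exact HS0 | apply incl_tl, incl_refl | apply incl_refl | exact E].
Qed.

Lemma transferable_Rimp x y A B S G D :
  y <> x -> ~ In y (rel_labels S) -> ~ In y (lf_labels G) -> ~ In y (lf_labels D) ->
  transferable ((x, y) :: S) ((y, A) :: G) ((y, B) :: D) ->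
  transferable S G ((x, Imp A B) :: D).
Proof.
  intros Hyx HS HG HD T h S' G' D' E. destruct (embedding_consR_inv E) as [Hx E'].
  destruct (rcover_inv Hx) as [[v [Hv Rv]] | [z [Rz [HzA HzB]]]].
  - destruct (in_perm_cons Hv) as [D2 PD].
    destruct (fresh_label (v :: rel_labels S' ++ lf_labels G' ++ lf_labels D')) as [z Hz].
    simpl in Hz. rewrite !in_app_iff in Hz.
    assert (HzD2 : ~ In z (lf_labels D2)).
    { intros Hin. apply Hz. do 3 right.
      apply (Permutation_in _ (Permutation_map fst (Permutation_sym PD))). now right. }
    apply (G3I_permR (Permutation_sym PD)), (G3I_Rimp v z); [intros ->; apply Hz; now left | tauto .. |].
    apply (T (upd h y z)), embedding_fresh; auto.
    + eapply rt_trans; [eapply reach_incl; [apply incl_tl, incl_refl | exact Rv] |].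
      apply reach_in. now left.
    + eapply lcover_in; [now left | apply rt_refl].
    + eapply rcover_in; [now left | apply rt_refl].
    + eapply embedding_refineR;
        [| eapply embedding_incl; [apply incl_tl, incl_refl | apply incl_tl, incl_refl | apply incl_refl | exact E']].
      eapply rcovered_replace; [exact PD | | apply incl_tl, incl_refl].
      apply (@rcover_imp _ _ _ v z).
      * apply reach_in. now left.
      * eapply lcover_in; [now left | apply rt_refl].
      * eapply rcover_in; [now left | apply rt_refl].
  - now apply (T (upd h y z)), embedding_fresh.
Qed.

Lemma transferable_refl x S G D :
  transferable ((x, x) :: S) G D -> transferable S G D.
Proof. intros T h S' G' D' E. apply (T h), embedding_consS; [apply rt_refl | exact E]. Qed.

Lemma transferable_trans x y z S G D :
  transferable ((x, z) :: (x, y) :: (y, z) :: S) G D ->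
  transferable ((x, y) :: (y, z) :: S) G D.
Proof.
  intros T h S' G' D' E. apply (T h), embedding_consS; [| exact E].
  destruct (embedding_consS_inv E) as [Rxy E1].
  destruct (embedding_consS_inv E1) as [Ryz _].
  eapply rt_trans; eassumption.
Qed.

Theorem G3I_transferable S G D : G3I S G D -> transferable S G D.
Proof.
  induction 1.
  - eapply transferable_perm; eassumption.
  - apply transferable_Ax.
  - apply transferable_Lbot.
  - now apply transferable_Land.
  - now apply transferable_Rand.
  - now apply transferable_Lor.
  - now apply transferable_Ror.
  - now apply transferable_Limp.
  - eapply transferable_Rimp; eassumption.
  - eapply transferable_refl; eassumption.
  - eapply transferable_trans; eassumption.
Qed.

Theorem mainTheorem2 :
  forall (x y : label) (A : form) (S : list relf) (G D : list lform),
    (G3I ((x, y) :: S) ((x, A) :: (y, A) :: G) D ->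
     G3I ((x, y) :: S) ((x, A) :: G) D)
    /\
    (G3I ((x, y) :: S) G ((x, A) :: (y, A) :: D) ->
     G3I ((x, y) :: S) G ((y, A) :: D)).
Proof.
  intros x y A S G D.
  assert (Rxy : reach ((x, y) :: S) x y) by (apply reach_in; now left).
  split; intros H; apply (G3I_transferable H (h := fun l => l)).
  - apply embedding_consL; [eapply lcover_in; [now left | apply rt_refl] |].
    apply embedding_consL; [eapply lcover_in; [now left | exact Rxy] |].
    eapply embedding_incl; [apply incl_refl | apply incl_tl, incl_refl | apply incl_refl |].
    apply embedding_id.
  - apply embedding_consR; [eapply rcover_in; [now left | exact Rxy] |].
    apply embedding_consR; [eapply rcover_in; [now left | apply rt_refl] |].
    eapply embedding_incl; [apply incl_refl | apply incl_refl | apply incl_tl, incl_refl |].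
    apply embedding_id.
Qed.
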